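(* Let $(X,\mathcal{A},\mu,T)$ be an ergodic probability-preserving system and let $(E_k)_{k\geq1}$ be a sequence in $\mathcal{A}$ (with $\mu(E_k)>0$, so that the hitting times below are defined). Then the following are equivalent: (a) $\mu(E_k)\to0$ as $k\to\infty$; (b) $\nu(E_k)\to0$ as $k\to\infty$ for all probability measures $\nu\ll\mu$ on $(X,\mathcal{A})$; (c) $\varphi_{E_k}\to\infty$ in $\mu$-measure as $k\to\infty$; (d) $\varphi_{E_k}\to\infty$ in $\nu$-measure as $k\to\infty$ for all probability measures $\nu\ll\mu$; (e) $\varphi_{E_k}\to\infty$ in $\nu$-measure as $k\to\infty$ for some probability measure $\nu\ll\mu$.
   Context: A measure preserving transformation $T$ of a probability space $(X,\mathcal{A},\mu)$ is a measurable map $T:X\to X$ with $\mu\circ T^{-1}=\mu$; it may be non-invertible. For $Y\in\mathcal{A}$ with $\mu(Y)>0$, the first hitting time is $\varphi_Y(x):=\min\{n\geq1: T^n x\in Y\}\in\mathbb{N}\cup\{\infty\}$. ''$\varphi_{E_k}\to\infty$ in $\nu$-measure'' means $\nu(\varphi_{E_k}\leq N)\to0$ as $k\to\infty$ for every $N\geq1$. *)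

From HB Require Import structures.
From mathcomp Require Import all_boot all_order all_algebra.
From mathcomp Require Import all_classical all_reals all_analysis.
Set Implicit Arguments. Unset Strict Implicit. Unset Printing Implicit Defensive.
Import Order.TTheory GRing.Theory Num.Theory.
Local Open Scope classical_set_scope.
Local Open Scope ring_scope.
Local Open Scope ereal_scope.

Definition measure_preserving d (X : measurableType d) (R : realType)
  (mu : set X -> \bar R) (T : X -> X) : Prop :=
  measurable_fun setT T /\
  forall A : set X, measurable A -> mu (T @^-1` A) = mu A.

Definition ergodic d (X : measurableType d) (R : realType)
  (mu : set X -> \bar R) (T : X -> X) : Prop :=
  forall A : set X, measurable A -> T @^-1` A = A -> mu A = 0 \/ mu A = 1.

(* The event {x | phi_Y(x) <= N}, where phi_Y(x) = min {n >= 1 | T^n x \in Y}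
   is the first hitting time of Y: some n with 1 <= n <= N has T^n x in Y. *)
Definition hit_le (X : Type) (T : X -> X) (Y : set X) (N : nat) : set X :=
  [set x | exists n : nat, (1 <= n <= N)%N /\ Y (iter n T x)].

(* "phi_{E_k} -> oo in nu-measure": nu(phi_{E_k} <= N) -> 0 for every N >= 1 *)
Definition hit_cvg_infty_in_measure d (X : measurableType d) (R : realType)
  (nu : set X -> \bar R) (T : X -> X) (E : nat -> set X) : Prop :=
  forall N : nat, (1 <= N)%N ->
    (fun k => nu (hit_le T (E k) N)) @ \oo --> 0.

From HB Require Import structures.
From mathcomp Require Import all_boot all_order all_algebra.
From mathcomp Require Import all_classical all_reals all_analysis.
From mathcomp Require Import measurable_realfun.
Import Order.TTheory GRing.Theory Num.Theory.
Local Open Scope classical_set_scope.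
Local Open Scope ring_scope.
Local Open Scope ereal_scope.

(* The implications (a) <-> (c) come from invariance: mu (phi_E <= N) <= N mu E
   and mu (phi_E <= 1) = mu (T^-1 E) = mu E.  Absolute continuity turns (a) into
   (b) and (c) into (d), and (d) gives (e) with nu = mu.  For (e) -> (a), the
   Radon-Nikodym density of nu provides a set Y with mu Y > 0 on which
   mu <= c nu.  By ergodicity almost every orbit visits Y, so the set W_N of
   points not visiting Y before time N has small measure for large N.  A point
   of T^-N E outside W_N visits Y at some time j < N and from there hits E
   within N steps, hence mu E <= mu W_N + N c nu (phi_E <= N). *)

Section nonneg_cvg0.
Context {R : realType}.
Implicit Types u : nat -> \bar R.

Lemma cvg0_ge0P u : (forall k, 0 <= u k) ->
  u @ \oo --> 0 <-> forall e : R, (0 < e)%R -> \forall k \near \oo, u k <= e%:E.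
Proof.
move=> u0; split.
- move=> /fine_cvgP [ufin /cvgrPdist_le uc] e e0.
  apply: filterS2 ufin (uc e e0) => k fk /=.
  rewrite sub0r normrN => h.
  by rewrite -(fineK fk) lee_fin (le_trans _ h)// ler_norm.
- move=> h; have ufin : \forall k \near \oo, u k \is a fin_num.
    apply: filterS (h 1%R ltr01) => k uk1.
    by rewrite ge0_fin_numE// (le_lt_trans uk1)// ltry.
  apply/fine_cvgP; split => //; apply/cvgrPdist_le => e e0.
  apply: filterS2 ufin (h e e0) => k fk uke /=.
  by rewrite sub0r normrN ger0_norm ?fine_ge0// -lee_fin fineK.
Qed.

Lemma cvg0_le_scale u (v : nat -> \bar R) (c : R) :
  (forall k, 0 <= u k <= c%:E * v k) -> v @ \oo --> 0 -> u @ \oo --> 0.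
Proof.
move=> uv v0; apply: (@squeeze_cvge _ _ _ _ (cst 0) _ (fun k => c%:E * v k)).
- exact: nearW.
- exact: cvg_cst.
- by rewrite -(mule0 c%:E); apply: cvgeZl.
Qed.

Lemma cvg0_le_add u (a : nat -> \bar R) (v : nat -> nat -> \bar R) :
  (forall k, 0 <= u k) -> (forall N, 0 <= a N) -> (forall N k, 0 <= v N k) ->
  (forall N k, u k <= a N + v N k) ->
  a @ \oo --> 0 -> (forall N, v N @ \oo --> 0) -> u @ \oo --> 0.
Proof.
move=> u0 a0 v0 uav /(cvg0_ge0P _ a0) a_small v_small.
apply/cvg0_ge0P => // e e0.
have e20 : (0 < e / 2)%R by rewrite divr_gt0.
have [N _ /(_ N (leqnn N)) aN] := a_small _ e20.
have /(cvg0_ge0P _ (v0 N))/(_ _ e20) := v_small N.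
apply: filterS => k vk.
by rewrite (le_trans (uav N k))// (splitr e) EFinD leeD.
Qed.

End nonneg_cvg0.

Section dominates_finite_measure.
Context {d} {X : measurableType d} {R : realType}.
Context {mu : {measure set X -> \bar R}} {nu : {finite_measure set X -> \bar R}}.
Hypothesis numu : nu `<< mu.

Lemma dominates_small_measure (e : R) : (0 < e)%R ->
  exists2 del : R, (0 < del)%R &
    forall A, measurable A -> mu A < del%:E -> nu A < e%:E.
Proof.
move=> e0; have [P [N PN]] := Hahn_decomposition (charge_of_finite_measure nu).
have [del [del0 small]] := charge_variation_continuous PN numu e0.
exists del => // A mA muA; apply: le_lt_trans (small A mA muA).
by apply: le_trans (abse_charge_variation PN mA); rewrite gee0_abs.
Qed.

Lemma dominates_cvg0 (F : nat -> set X) : (forall k, measurable (F k)) ->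
  (fun k => mu (F k)) @ \oo --> 0 -> (fun k => nu (F k)) @ \oo --> 0.
Proof.
move=> mF /(cvg0_ge0P _ (fun _ => measure_ge0 _ _)) mu_small.
apply/cvg0_ge0P => // e e0.
have [del del0 small] := dominates_small_measure _ e0.
have /mu_small : (0 < del / 2)%R by rewrite divr_gt0.
apply: filterS => k muk; apply/ltW/small => //.
by rewrite (le_lt_trans muk)// lte_fin ltr_pdivrMr// ltr_pMr// ltr1n.
Qed.

End dominates_finite_measure.

Section density_lower_bound.
Context {d} {X : measurableType d} {R : realType}.
Context {mu : {sigma_finite_measure set X -> \bar R}}
  {nu : {finite_measure set X -> \bar R}}.
Hypothesis numu : nu `<< mu.

Local Notation f := (Radon_Nikodym_SigmaFinite.f nu mu).

Let level m := [set x | ((m.+1%:R)^-1)%:E < f x].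

Let measurable_density : measurable_fun setT f.
Proof. exact/measurable_int/(Radon_Nikodym_SigmaFinite.f_integrable numu). Qed.

Let measurable_level m : measurable (level m).
Proof. by rewrite -[level m]setTI; apply: measurable_lte. Qed.

Let measurable_density_pos : measurable [set x | 0 < f x].
Proof. by rewrite -[X in measurable X]setTI; apply: measurable_lte. Qed.

Lemma density_pos_measure_gt0 : 0 < nu setT -> 0 < mu [set x | 0 < f x].
Proof.
set P := [set x | 0 < f x] => nu_gt0.
rewrite lt0e measure_ge0 andbT; apply/eqP => mu0.
have nu_pos : nu P = 0 by move/null_content_dominatesP : numu; apply.
have nu_npos : nu (~` P) = 0.
  rewrite (Radon_Nikodym_SigmaFinite.f_integral numu)//; last exact: measurableC.
  apply: integral0_eq => x /negP; rewrite -leNgt => fx0.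
  by apply/eqP; rewrite eq_le fx0 Radon_Nikodym_SigmaFinite.f_ge0.
have nuT : nu setT = nu P + nu (~` P).
  by rewrite -(setUv P) measureU ?setICr//; exact: measurableC.
by move: nu_gt0; rewrite nuT nu_pos nu_npos adde0 ltxx.
Qed.

Lemma density_pos_bigcup_level : [set x | 0 < f x] = \bigcup_m level m.
Proof.
apply/seteqP; split => [x /= fx0|x [m _]]; last exact: lt_trans.
have ffin := Radon_Nikodym_SigmaFinite.f_fin_num numu x.
have fx0' : (0 < fine (f x))%R by rewrite -lte_fin fineK.
have [m _ /(_ m (leqnn m)) m_lt] := near_infty_natSinv_lt (PosNum fx0').
by exists m => //; rewrite /level /= -(fineK ffin) lte_fin.
Qed.

Lemma exists_density_level_gt0 : 0 < nu setT -> exists m, 0 < mu (level m).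
Proof.
move=> /density_pos_measure_gt0; apply: contraPP => /forallNP level0.
have {}level0 m : mu.-negligible (level m).
  apply/negligibleP => //; apply/eqP; rewrite eq_le measure_ge0 andbT leNgt.
  exact/negP/level0.
have mU : measurable (\bigcup_m level m) by exact: bigcupT_measurable.
rewrite density_pos_bigcup_level (negligibleP _ mU).1 ?ltxx//.
exact: negligible_bigcup.
Qed.

Lemma measure_density_level_le m A : measurable A ->
  mu (A `&` level m) <= m.+1%:R%:E * nu A.
Proof.
move=> mA; have mAl : measurable (A `&` level m) by exact: measurableI.
have int_level : ((m.+1%:R)^-1)%:E * mu (A `&` level m) <= nu (A `&` level m).
  rewrite (Radon_Nikodym_SigmaFinite.f_integral numu)// -integral_cst//.
  apply: ge0_le_integral => //.
  - by move=> x _; rewrite lee_fin invr_ge0.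
  - exact: measurable_funS measurable_density.
  - by move=> x [_ /ltW].
apply: (@le_trans _ _ (m.+1%:R%:E * nu (A `&` level m))).
  apply: le_trans (lee_wpmul2l _ int_level); last by rewrite lee_fin.
  by rewrite muleA -EFinM mulfV ?mul1e// pnatr_eq0.
by apply: lee_wpmul2l => //; rewrite le_measure ?inE//; exact: subIsetl.
Qed.

Lemma dominated_measure_lower_bound : 0 < nu setT ->
  exists (Y : set X) (c : R), [/\ measurable Y, 0 < mu Y, (0 < c)%R &
    forall A, measurable A -> mu (A `&` Y) <= c%:E * nu A].
Proof.
move=> /exists_density_level_gt0[m level_gt0].
exists (level m), m.+1%:R; split => //.
exact: measure_density_level_le.
Qed.

End density_lower_bound.

Section orbit_visits.
Context {X : Type} (T : X -> X).

Definition visits_before (K : nat) (Z : set X) : set X :=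
  [set x | exists2 j, (j < K)%N & Z (iter j T x)].

Definition visits_from (m : nat) (Z : set X) : set X :=
  [set x | exists2 n, (m <= n)%N & Z (iter n T x)].

Lemma visits_before0 Z : visits_before 0 Z = set0.
Proof. by apply/seteqP; split => x // []. Qed.

Lemma visits_beforeS K Z :
  visits_before K.+1 Z = visits_before K Z `|` iter K T @^-1` Z.
Proof.
apply/seteqP; split => [x [j]|x [[j jK Zj]|ZK]].
- by rewrite ltnS leq_eqVlt => /orP[/eqP-> ZK|jK Zj]; [right|left; exists j].
- by exists j => //; exact: ltnW.
- by exists K.
Qed.

Lemma hit_leE E N : hit_le T E N = visits_before N (T @^-1` E).
Proof.
apply/seteqP; split => [x [[|n] [/andP[//= n1 nN] En]]|x [j jN Ej]].
- by exists n.
- by exists j.+1.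
Qed.

Lemma hit_le1 E : hit_le T E 1 = T @^-1` E.
Proof.
rewrite hit_leE visits_beforeS visits_before0 set0U.
by apply/seteqP; split.
Qed.

Lemma visits_fromE m Z : visits_from m Z = iter m T @^-1` visits_from 0 Z.
Proof.
apply/seteqP; split => [x [n mn Zn]|x [n _ Zn]].
- by exists (n - m)%N => //; rewrite -iterD subnK.
- by exists (n + m)%N; rewrite ?leq_addl// iterD.
Qed.

Lemma preimage_bigcap_visits_from Z :
  T @^-1` (\bigcap_m visits_from m Z) = \bigcap_m visits_from m Z.
Proof.
apply/seteqP; split => [x TxZ m _|x xZ m _].
- by have [n mn Zn] := TxZ m I; exists n.+1; rewrite ?iterSr// leqW.
- have [[|n] //= mn Zn] := xZ m.+1 I.
  by exists n; rewrite -?iterSr.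
Qed.

Lemma bigcap_not_visits_before Z :
  \bigcap_N ~` visits_before N Z = ~` visits_from 0 Z.
Proof.
apply/seteqP; split => [x notZ [n _ Zn]|x notZ N _ [n _ Zn]].
- by apply: (notZ n.+1 I); exists n.
- by apply: notZ; exists n.
Qed.

Lemma iter_preimage_subset_visits E Y N :
  iter N T @^-1` E `<=`
    ~` visits_before N Y `|` visits_before N (Y `&` hit_le T E N).
Proof.
move=> x EN; have [[j jN Yj]|] := pselect (visits_before N Y x); last by left.
right; exists j => //; split => //; exists (N - j)%N.
by rewrite subn_gt0 jN leq_subr -iterD subnK// ltnW.
Qed.

End orbit_visits.

Section measurable_visits.
Context {d} {X : measurableType d} {T : X -> X}.
Hypothesis mT : measurable_fun setT T.

Lemma measurable_preimage A : measurable A -> measurable (T @^-1` A).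
Proof. by move=> mA; rewrite -[_ @^-1` _]setTI; exact: mT. Qed.

Lemma measurable_iter_preimage n A :
  measurable A -> measurable (iter n T @^-1` A).
Proof.
by elim: n A => [//|n IH] A mA; exact: (IH _ (measurable_preimage _ mA)).
Qed.

Lemma measurable_visits_before K Z :
  measurable Z -> measurable (visits_before T K Z).
Proof.
move=> mZ; elim: K => [|K IH]; first by rewrite visits_before0.
rewrite visits_beforeS; apply: measurableU => //.
exact: measurable_iter_preimage.
Qed.

Lemma measurable_visits_from m Z :
  measurable Z -> measurable (visits_from T m Z).
Proof.
move=> mZ; have -> : visits_from T m Z =
    \bigcup_(n in [set n | (m <= n)%N]) (iter n T @^-1` Z).
  by apply/seteqP; split => x /= [n]; exists n.
by apply: bigcup_measurable => n _; exact: measurable_iter_preimage.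
Qed.

Lemma measurable_hit_le E N : measurable E -> measurable (hit_le T E N).
Proof.
move=> mE; rewrite hit_leE.
exact/measurable_visits_before/measurable_preimage.
Qed.

End measurable_visits.

Section measure_preserving_visits.
Context {d} {X : measurableType d} {R : realType}.
Context {mu : {measure set X -> \bar R}} {T : X -> X}.
Hypothesis hT : measure_preserving mu T.

Lemma measure_iter_preimage n A : measurable A -> mu (iter n T @^-1` A) = mu A.
Proof.
elim: n A => [//|n IH] A mA.
have mTA := measurable_preimage hT.1 _ mA.
by have := IH _ mTA; rewrite hT.2.
Qed.

Lemma measure_visits_before_le K Z :
  measurable Z -> mu (visits_before T K Z) <= K%:R%:E * mu Z.
Proof.
move=> mZ; elim: K => [|K IH]; first by rewrite visits_before0 measure0 mul0e.
rewrite visits_beforeS -natr1 EFinD ge0_muleDl ?lee_fin// mul1e.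
have mV := measurable_visits_before hT.1 K _ mZ.
have mI := measurable_iter_preimage hT.1 K _ mZ.
rewrite -{2}(measure_iter_preimage K _ mZ).
exact: le_trans (measureU2 _ mV mI) (leeD IH (lexx _)).
Qed.

Lemma measure_hit_le_le E N : measurable E -> mu (hit_le T E N) <= N%:R%:E * mu E.
Proof.
move=> mE; rewrite hit_leE -(hT.2 _ mE).
by apply: measure_visits_before_le; exact: measurable_preimage hT.1 _ _.
Qed.

Lemma measure_hit_le1 E : measurable E -> mu (hit_le T E 1) = mu E.
Proof. by move=> mE; rewrite hit_le1 hT.2. Qed.

Lemma measure_le_not_visits_add_hit Y E N : measurable Y -> measurable E ->
  mu E <= mu (~` visits_before T N Y) + N%:R%:E * mu (Y `&` hit_le T E N).
Proof.
move=> mY mE; have mT := hT.1.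
have mYE : measurable (Y `&` hit_le T E N).
  by apply: measurableI => //; exact: measurable_hit_le.
have mnotY : measurable (~` visits_before T N Y).
  exact/measurableC/measurable_visits_before.
rewrite -(measure_iter_preimage N _ mE).
apply: le_trans (le_measure _ _ _ (iter_preimage_subset_visits T E Y N)) _.
- by rewrite inE; exact: measurable_iter_preimage.
- by rewrite inE; apply: measurableU => //; exact: measurable_visits_before.
apply: le_trans (measureU2 _ mnotY (measurable_visits_before mT N _ mYE)) _.
by rewrite leeD2l// measure_visits_before_le.
Qed.

Lemma hit_cvg_of_measure_cvg0 (E : nat -> set X) : (forall k, measurable (E k)) ->
  (fun k => mu (E k)) @ \oo --> 0 -> hit_cvg_infty_in_measure mu T E.
Proof.
move=> mE muE0 N _; apply: (cvg0_le_scale _ _ N%:R) muE0 => k.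
by rewrite measure_ge0 measure_hit_le_le.
Qed.

Lemma measure_cvg0_of_hit_cvg (E : nat -> set X) : (forall k, measurable (E k)) ->
  hit_cvg_infty_in_measure mu T E -> (fun k => mu (E k)) @ \oo --> 0.
Proof.
move=> mE /(_ 1%N isT).
by under eq_fun do rewrite measure_hit_le1//.
Qed.

End measure_preserving_visits.

Section ergodic_visits.
Context {d} {X : measurableType d} {R : realType}.
Context {mu : probability X R} {T : X -> X}.
Hypothesis hT : measure_preserving mu T.
Hypothesis herg : ergodic mu T.

(* The points visiting [Y] infinitely often form a strictly invariant set,
   which ergodicity forces to be of full measure. *)
Lemma measure_visits_from0 Y : measurable Y -> 0 < mu Y ->
  mu (visits_from T 0 Y) = 1.
Proof.
move=> mY Y_gt0; have mT := hT.1.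
pose C m := visits_from T m Y.
have mC m : measurable (C m) := measurable_visits_from mT m _ mY.
have mB : measurable (\bigcap_m C m) := bigcapT_measurable mC.
have muC m : mu (C m) = mu (C 0%N).
  by rewrite /C {1}(visits_fromE T m Y) measure_iter_preimage//; exact: mC.
have muB : mu (\bigcap_m C m) = mu (C 0%N).
  have C_cvg : mu \o C @ \oo --> mu (\bigcap_m C m).
    apply: nonincreasing_cvg_mu => //.
    - by rewrite (le_lt_trans (probability_le1 _ _))// ltry.
    - move=> m n mn; apply/subsetPset => x [k nk Yk].
      by exists k => //; exact: leq_trans nk.
  have C_cst : mu \o C = cst (mu (C 0%N)) by apply/funext => m /=; exact: muC.
  by rewrite C_cst in C_cvg; exact: (cvg_unique _ C_cvg (cvg_cst _)).
have [B0|B1] := herg _ mB (preimage_bigcap_visits_from T Y); last by rewrite -muB.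
have : mu Y <= mu (C 0%N) by apply: le_measure; rewrite ?inE// => x Yx; exists 0%N.
by rewrite -muB B0 leNgt Y_gt0.
Qed.

Lemma measure_not_visits_before_cvg0 Y : measurable Y -> 0 < mu Y ->
  (fun N => mu (~` visits_before T N Y)) @ \oo --> 0.
Proof.
move=> mY Y_gt0; have mT := hT.1.
have mW N : measurable (~` visits_before T N Y).
  exact/measurableC/measurable_visits_before.
have W0 : mu (\bigcap_N ~` visits_before T N Y) = 0.
  rewrite bigcap_not_visits_before probability_setC ?measure_visits_from0 ?subee//.
  exact: measurable_visits_from.
rewrite -W0; apply: nonincreasing_cvg_mu => //.
- by rewrite (le_lt_trans (probability_le1 _ _))// ltry.
- exact: bigcapT_measurable.
- move=> m n mn; apply/subsetPset => x notV [j jm Yj].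
  by apply: notV; exists j => //; exact: leq_trans mn.
Qed.

Lemma measure_cvg0_of_dominated_hit_cvg (nu : probability X R) (E : nat -> set X) :
  nu `<< mu -> (forall k, measurable (E k)) ->
  hit_cvg_infty_in_measure nu T E -> (fun k => mu (E k)) @ \oo --> 0.
Proof.
move=> numu mE nu_hit; have mT := hT.1.
have nu_gt0 : 0 < nu setT by rewrite probability_setT.
have [Y [c [mY Y_gt0 c_gt0 Yc]]] := dominated_measure_lower_bound numu nu_gt0.
apply: (cvg0_le_add _ (fun N => mu (~` visits_before T N.+1 Y))
  (fun N k => (N.+1%:R * c)%:E * nu (hit_le T (E k) N.+1))) => //.
- by move=> N k; rewrite mule_ge0// lee_fin mulr_ge0// ltW.
- move=> N k.
  apply: le_trans (measure_le_not_visits_add_hit hT _ _ N.+1 mY (mE k)) _.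
  rewrite leeD2l// EFinM -muleA lee_wpmul2l// setIC Yc//.
  exact: measurable_hit_le.
- by have := measure_not_visits_before_cvg0 _ mY Y_gt0; rewrite -cvg_shiftS.
- move=> N; rewrite -(mule0 (N.+1%:R * c)%:E).
  by apply: cvgeZl => //; exact: nu_hit.
Qed.

End ergodic_visits.

Theorem mainTheorem1 (d : measure_display) (X : measurableType d)
  (R : realType) (mu : probability X R) (T : X -> X)
  (hT : measure_preserving mu T) (herg : ergodic mu T)
  (E : nat -> set X) (hE : forall k, measurable (E k))
  (hpos : forall k, 0 < mu (E k)) :
  let a := (fun k => mu (E k)) @ \oo --> 0 in
  let b := forall nu : probability X R, nu `<< mu ->
             (fun k => nu (E k)) @ \oo --> 0 in
  let c := hit_cvg_infty_in_measure mu T E in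
  let d' := forall nu : probability X R, nu `<< mu ->
             hit_cvg_infty_in_measure nu T E in
  let e := exists nu : probability X R, nu `<< mu /\
             hit_cvg_infty_in_measure nu T E in
  (a <-> b) /\ (a <-> c) /\ (a <-> d') /\ (a <-> e).
Proof.
move=> a b c d' e.
have ac : a -> c := hit_cvg_of_measure_cvg0 hT _ hE.
have ca : c -> a := measure_cvg0_of_hit_cvg hT _ hE.
have mumu : mu `<< mu by move=> A.
have ab : a -> b := fun ha nu numu => dominates_cvg0 numu _ hE ha.
have ba : b -> a := fun hb => hb mu mumu.
have ad : a -> d'.
  move=> ha nu numu N N_gt0.
  apply: (dominates_cvg0 numu (fun k => hit_le T (E k) N)) (ac ha N N_gt0) => k.
  exact: measurable_hit_le hT.1 _ N (hE k).
have de : d' -> e by move=> hd; exists mu; split; [exact: mumu|exact: hd].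
have ea : e -> a.
  move=> [nu [numu nu_hit]].
  exact: measure_cvg0_of_dominated_hit_cvg hT herg _ _ numu hE nu_hit.
by do !split => //; [move=> /de/ea|move=> /ad/de].
Qed.
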